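(* Let $Q:\mathbb C\to\mathbb C$ be a polynomial of odd degree $2g+1$ with $2g$ distinct critical values, and let $f:\mathbb C\to\mathbb C$ be a diffeomorphism such that $Q(f(x))=Q(x)$ for all $x\in\mathbb C$. Then $f(x)=x$ for all $x$. *)

From HB Require Import structures.
From mathcomp Require Import all_boot all_order all_algebra.
From mathcomp Require Import all_classical all_reals all_analysis.
From mathcomp.real_closed Require Import complex.
Import numFieldNormedType.Exports.
Set Implicit Arguments. Unset Strict Implicit. Unset Printing Implicit Defensive.
Import Order.TTheory GRing.Theory Num.Theory.
Local Open Scope ring_scope.

Definition realify (R : realType) (f : R[i] -> R[i]) : R * R -> R * R :=
  fun p => let: Complex a b := f (Complex p.1 p.2) in (a, b).

Fixpoint Ck (R : realType) (k : nat) (F : R * R -> R * R) : Prop :=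
  match k with
  | O => continuous F
  | S k' => continuous F /\ (forall x v : R * R, derivable F x v)
            /\ (forall v : R * R, Ck k' (fun x => 'D_v F x))
  end.

Definition smooth (R : realType) (F : R * R -> R * R) : Prop := forall k, Ck k F.

Definition diffeomorphism (R : realType) (f : R[i] -> R[i]) : Prop :=
  exists finv : R[i] -> R[i],
    cancel f finv /\ cancel finv f /\
    smooth (realify f) /\ smooth (realify finv).

Definition is_critical_value (R : realType) (Q : {poly R[i]}) (w : R[i]) : Prop :=
  exists z : R[i], root Q^`() z /\ Q.[z] = w.

Definition has_n_critical_values (R : realType) (Q : {poly R[i]}) (n : nat) : Prop :=
  exists s : seq R[i], uniq s /\ size s = n /\
    (forall w, w \in s <-> is_critical_value Q w).

From HB Require Import structures.
From mathcomp Require Import all_boot all_order all_algebra.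
From mathcomp Require Import all_classical all_reals all_analysis.
From mathcomp.real_closed Require Import complex.
From mathcomp Require Import ring lra.
From mathcomp Require Import separable.
Import numFieldNormedType.Exports.
Set Implicit Arguments. Unset Strict Implicit. Unset Printing Implicit Defensive.
Import Order.TTheory GRing.Theory Num.Theory Normc.
Local Open Scope ring_scope.

(* Where [Q'] does not
   vanish, [Q] is locally injective, so a continuous [Q]-preserving map fixing
   such a point fixes a neighbourhood of it; by real induction along an arc
   avoiding the critical points, it then fixes every point.
   Counting shows that the [2g] critical points of [Q] are simple and have
   pairwise distinct critical values.  Near a critical point [Q] is not
   injective, so [f] maps critical points to critical points, hence fixes each
   of them; near a simple critical point [Q] is at most 2 to 1, so [f \o f]
   fixes a regular point and [f] is an involution.  A regular fibre has the odd
   number [2g + 1] of points and is [f]-stable, so [f] fixes one of them, and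
   thus every point.  For [g = 0], [Q] is affine, hence injective. *)

Lemma real_induction01 (R : realType) (P : R -> Prop) :
  P 0 ->
  (forall t, 0 < t <= 1 -> (forall s, 0 <= s < t -> P s) -> P t) ->
  (forall t, 0 <= t < 1 -> (forall s, 0 <= s <= t -> P s) ->
     exists2 e, 0 < e & forall s, t < s < t + e -> P s) ->
  forall t, 0 <= t <= 1 -> P t.
Proof.
move=> P0 Pclosed Popen.
pose A : set R := fun t => 0 <= t <= 1 /\ forall s, 0 <= s <= t -> P s.
have A0 : A 0.
  split=> [|s /andP[s0 s0']]; first by rewrite lexx ler01.
  by have -> : s = 0 by apply/eqP; rewrite eq_le s0 s0'.
have supA : has_sup A by split; [exists 0 | exists 1 => t [/andP[_ ?] _]].
set m := sup A.
have m0 : 0 <= m := sup_upper_bound supA A0.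
have m1 : m <= 1 by apply: ge_sup; [exists 0 | move=> t [/andP[_ ?] _]].
have below_m s : 0 <= s < m -> P s.
  case/andP=> s0 sm; have ms0 : 0 < m - s by rewrite subr_gt0.
  have [t [_ At] mt] := sup_adherent ms0 supA.
  by apply: At; rewrite s0 /= ltW //; move: mt; rewrite opprB addrCA subrr addr0.
have Am : A m.
  split=> [|s /andP[s0]]; first by rewrite m0 m1.
  rewrite le_eqVlt => /orP[/eqP-> | sm]; last by apply: below_m; rewrite s0.
  have [->|mn0] := eqVneq m 0; first exact: P0.
  by apply: Pclosed => //; rewrite lt_neqAle eq_sym mn0 m0.
have m_eq1 : m = 1.
  apply/eqP; rewrite eq_le m1 /= leNgt; apply/negP => m_lt1.
  have [e e0 Pe] := Popen m (introT andP (conj m0 m_lt1)) Am.2.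
  set t := Num.min 1 (m + e / 2).
  suff /(sup_upper_bound supA) : A t by rewrite ge_min leNgt m_lt1 /= -/m; lra.
  split=> [|s /andP[s0]]; first by rewrite ge_min lexx le_min ler01 /=; lra.
  rewrite le_min => /andP[_ st].
  have [sm|ms] := leP s m; first by apply: Am.2; rewrite s0.
  by apply: Pe; rewrite ms /=; lra.
by move=> t /andP[t0 t1]; apply: Am.2; rewrite t0 -/m m_eq1.
Qed.

Section ComplexModulus.
Variable R : rcfType.
Implicit Types (z w : R[i]).

Lemma normc_ge0 z : 0 <= normc z.
Proof. by case: z => a b; apply: sqrtr_ge0. Qed.

Lemma normc_gt0 z : z != 0 -> 0 < normc z.
Proof.
move=> z0; rewrite lt_neqAle normc_ge0 andbT eq_sym.
by apply: contra z0 => /eqP/eq0_normc ->.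
Qed.

Lemma distcC z w : normc (z - w) = normc (w - z).
Proof. by rewrite -normcN opprB. Qed.

Lemma normc_le_shift z w : normc z <= normc (z - w) + normc w.
Proof. by rewrite -{1}(subrK w z) le_normcD. Qed.

Lemma normc_real (t : R) : normc t%:C%C = `|t|.
Proof. by rewrite /normc /= expr0n /= addr0 sqrtr_sqr. Qed.

Lemma normc_le_ReIm z : normc z <= `|complex.Re z| + `|complex.Im z|.
Proof.
case: z => a b; rewrite /normc /= -(@ger0_norm _ (`|a| + `|b|)) ?addr_ge0 //.
rewrite -(sqrtr_sqr (`|a| + `|b|)) ler_sqrt ?sqr_ge0 // sqrrD.
rewrite -[a ^+ 2]real_normK ?num_real // -[b ^+ 2]real_normK ?num_real //.
by rewrite [X in _ <= X]addrAC lerDl mulrn_wge0 ?mulr_ge0.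
Qed.

Lemma Re_le_normc z : `|complex.Re z| <= normc z.
Proof.
case: z => a b; rewrite /normc /= -sqrtr_sqr ler_sqrt ?addr_ge0 ?sqr_ge0 //.
by rewrite lerDl sqr_ge0.
Qed.

Lemma Im_le_normc z : `|complex.Im z| <= normc z.
Proof.
case: z => a b; rewrite /normc /= -sqrtr_sqr ler_sqrt ?addr_ge0 ?sqr_ge0 //.
by rewrite lerDr sqr_ge0.
Qed.

Lemma normc_sum (I : Type) (r : seq I) (F : I -> R[i]) :
  normc (\sum_(i <- r) F i) <= \sum_(i <- r) normc (F i).
Proof.
elim: r => [|a r IH]; first by rewrite !big_nil normc0.
by rewrite !big_cons (le_trans (le_normcD _ _)) // lerD2l.
Qed.

Lemma normc_prod (I : Type) (r : seq I) (F : I -> R[i]) :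
  normc (\prod_(i <- r) F i) = \prod_(i <- r) normc (F i).
Proof.
elim: r => [|a r IH]; first by rewrite !big_nil normc1.
by rewrite !big_cons normcM IH.
Qed.

Lemma normcX z k : normc (z ^+ k) = normc z ^+ k.
Proof. by elim: k => [|k IH]; rewrite ?normc1 // !exprS normcM IH. Qed.

End ComplexModulus.

Definition normc_continuous (R : rcfType) (h : R[i] -> R[i]) :=
  forall z e, 0 < e -> exists2 d, 0 < d &
    forall w, normc (w - z) < d -> normc (h w - h z) < e.

Lemma normc_continuous_comp (R : rcfType) (f h : R[i] -> R[i]) :
  normc_continuous f -> normc_continuous h -> normc_continuous (f \o h).
Proof.
move=> cf ch z e e0; have [d1 d10 H1] := cf (h z) e e0.
by have [d2 d20 H2] := ch z d1 d10; exists d2 => // w /H2 /H1.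
Qed.

Lemma realify_normc_continuous (R : realType) (f : R[i] -> R[i]) :
  continuous (realify f) -> normc_continuous f.
Proof.
move=> cf z e e0.
have realifyE w :
    realify f (complex.Re w, complex.Im w) = (complex.Re (f w), complex.Im (f w)).
  by case: w => a b; rewrite /realify /=; case: (f _).
have /(_ (nbhs_filter _)) /nbhs_normP[d /= d0 Hd] :=
  cvgr_dist_lt _ _ (cf (complex.Re z, complex.Im z)) _ (divr_gt0 e0 (ltr0Sn _ 1)).
exists d => // w wz; have := Hd (complex.Re w, complex.Im w).
rewrite /= !realifyE prod_normE /= !gt_max (distcC (f w)).
have := normc_le_ReIm (f z - f w); have := Re_le_normc (z - w).
have := Im_le_normc (z - w); rewrite (distcC z) /= !raddfB /=.
by move=> hI hR hf /(_ _)/andP[]; [apply/andP; split; lra | lra].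
Qed.

Lemma exists_notin_inj (T : eqType) (phi : nat -> T) (s : seq T) :
  injective phi -> exists k, phi k \notin s.
Proof.
move=> phi_inj; set ks := iota 0 (size s).+1.
have [/allP all_in | /allPn[k _ ks_out]] := boolP (all (fun k => phi k \in s) ks).
  have uniq_img : uniq (map phi ks) by rewrite map_inj_uniq ?iota_uniq.
  suff /(uniq_leq_size uniq_img) : {subset map phi ks <= s}.
    by rewrite size_map /ks size_iota ltnn.
  by move=> _ /mapP[k /all_in kin ->].
by exists k.
Qed.

Lemma involution_fixed_point (T : eqType) (phi : T -> T) (r : seq T) :
  involutive phi -> uniq r -> odd (size r) -> {in r, forall z, phi z \in r} ->
  exists2 z, z \in r & phi z = z.
Proof.
move=> phiK; have [n] := ubnP (size r); elim: n r => // n IH [//|z r] /= r_lt.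
move=> /andP[zr r_uniq] r_odd r_stable.
have [phiz | phizN] := eqVneq (phi z) z; first by exists z; rewrite ?mem_head.
have phiz_r : phi z \in r.
  by have := r_stable z (mem_head _ _); rewrite inE (negPf phizN).
have [y yr phiy] : exists2 y, y \in rem (phi z) r & phi y = y.
  have r_pos : (0 < size r)%N by case: (r) phiz_r.
  apply: IH; rewrite ?rem_uniq // ?size_rem //.
  - by rewrite ltnS in r_lt; apply: leq_ltn_trans (leq_pred _) r_lt.
  - by move: r_odd; rewrite -(prednK r_pos) /= negbK.
  move=> y; rewrite !mem_rem_uniq // !inE => /andP[yN yr]; apply/andP; split.
    by apply: contraNneq zr => /(congr1 phi); rewrite !phiK => <-.
  have := r_stable y; rewrite inE yr orbT => /(_ isT); rewrite inE.
  by case: eqP => // yz; move: yN; rewrite -yz phiK eqxx.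
by exists y; rewrite // inE (mem_rem yr) orbT.
Qed.

Lemma size_deriv_num (R : numDomainType) (p : {poly R}) : size p^`() = (size p).-1.
Proof.
have [le_p1|lt1p] := leqP (size p) 1.
  by rewrite [p]size1_polyC // derivC size_poly0 size_polyC; case: (_ != 0).
rewrite size_poly_eq // mulrn_eq0 negb_or.
have -> : (size p).-2.+1 = (size p).-1 by case: (size p) lt1p => [|[]].
by rewrite -lead_coefE lead_coef_eq0 -size_poly_gt0 ltnW // andbT -lt0n ltn_predRL.
Qed.

Lemma deriv_neq0 (R : numDomainType) (p : {poly R}) : (1 < size p)%N -> p^`() != 0.
Proof. by move=> p_gt1; rewrite -size_poly_gt0 size_deriv_num ltn_predRL. Qed.

Section DividedDifference.
Variable F : fieldType.
Implicit Types (P : {poly F}) (u z : F).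

Definition ddiff P u : {poly F} := (P - P.[u]%:P) %/ ('X - u%:P).

Definition ddiff2 P u : {poly F} := ddiff (ddiff P u) u.

Lemma ddiffK P u : ddiff P u * ('X - u%:P) = P - P.[u]%:P.
Proof. by rewrite divpK // dvdp_XsubCl /root !hornerE subrr. Qed.

Lemma horner_ddiff P u z : (ddiff P u).[z] * (z - u) = P.[z] - P.[u].
Proof. by have := congr1 (horner^~ z) (ddiffK P u); rewrite /= !hornerE. Qed.

Lemma horner_ddiffC P u z : (ddiff P u).[z] = (ddiff P z).[u].
Proof.
have [->//|uz] := eqVneq u z.
apply: (mulIf (_ : z - u != 0)); first by rewrite subr_eq0 eq_sym.
by rewrite horner_ddiff -[z - u]opprB mulrN horner_ddiff opprB.
Qed.

Lemma ddiff_diag P u : (ddiff P u).[u] = P^`().[u].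
Proof.
have -> : P^`() = (ddiff P u * ('X - u%:P))^`() by rewrite ddiffK derivB derivC subr0.
by rewrite derivM derivXsubC !hornerE subrr mulr0 add0r.
Qed.

Lemma taylor2 P u z :
  P.[z] = P.[u] + P^`().[u] * (z - u) + (ddiff2 P u).[z] * (z - u) ^+ 2.
Proof.
have e1 : (ddiff P u).[z] = P^`().[u] + (ddiff2 P u).[z] * (z - u).
  by rewrite horner_ddiff -ddiff_diag addrC subrK.
by rewrite -[LHS](subrK P.[u]) -horner_ddiff e1 mulrDl -mulrA -expr2 addrC addrA.
Qed.

Lemma ddiff2_diag P u : (ddiff2 P u).[u] *+ 2 = P^`()^`().[u].
Proof.
have -> : P^`() = (ddiff P u)^`() * ('X - u%:P) + ddiff P u.
  by rewrite -{1}(subrK P.[u]%:P P) -ddiffK derivD derivC addr0 derivM derivXsubC mulr1.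
by rewrite derivD derivM derivXsubC mulr1 !hornerE subrr mulr0 add0r ddiff_diag mulr2n.
Qed.

Lemma ddiff_spec P u : (1 < size P)%N ->
  size (ddiff P u) = (size P).-1 /\ lead_coef (ddiff P u) = lead_coef P.
Proof.
move=> P_gt1; have sizePu : size (P - P.[u]%:P) = size P.
  by rewrite size_addl // size_opp (leq_ltn_trans (size_polyC_leq1 _) P_gt1).
have Pu0 : ddiff P u != 0.
  by apply/eqP => Pu0; move: P_gt1; rewrite -sizePu -ddiffK Pu0 mul0r size_poly0.
split; last first.
  rewrite -[RHS](@lead_coefDl _ P (- P.[u]%:P)) -?ddiffK ?lead_coefM ?lead_coefXsubC ?mulr1 //.
  by rewrite size_opp (leq_ltn_trans (size_polyC_leq1 _) P_gt1).
by rewrite -sizePu -ddiffK size_mul ?polyXsubC_eq0 // size_XsubC addn2.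
Qed.

Lemma size2_horner_inj P : size P = 2 -> injective (horner P).
Proof.
move=> sizeP a b eab; have [] := ddiff_spec b (_ : 1 < size P)%N; rewrite sizeP //.
move=> /eqP/size_poly1P[c c0 Pb] _.
have := horner_ddiff P b a; rewrite Pb eab subrr hornerC => /eqP.
by rewrite mulf_eq0 (negPf c0) subr_eq0 => /eqP.
Qed.

End DividedDifference.

Section SplitPolynomial.
Variables (F : fieldType) (P : {poly F}) (rs : seq F).
Hypotheses (P0 : P != 0) (PE : P = lead_coef P *: \prod_(z <- rs) ('X - z%:P)).

Let lcP0 : lead_coef P != 0. Proof. by rewrite lead_coef_eq0. Qed.

Lemma root_split z : root P z = (z \in rs).
Proof. by rewrite PE rootZ // root_prod_XsubC. Qed.

Lemma size_split : size rs = (size P).-1.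
Proof. by rewrite [in RHS]PE size_scale // size_prod_XsubC. Qed.

Lemma horner_split z : P.[z] = lead_coef P * \prod_(x <- rs) (z - x).
Proof.
rewrite [in LHS]PE hornerZ horner_prod; congr (_ * _).
by apply: eq_bigr => x _; rewrite hornerXsubC.
Qed.

Lemma separable_split : separable_poly P = uniq rs.
Proof. by rewrite PE (eqp_separable (eqp_scale _ lcP0)) separable_prod_XsubC. Qed.

Lemma deriv_split_neq0 z : uniq rs -> z \in rs -> P^`().[z] != 0.
Proof.
rewrite -separable_split unlock => sepP zrs.
by apply: coprimep_root sepP _; rewrite root_split.
Qed.

End SplitPolynomial.

Section PolynomialsNearAPoint.
Variable R : rcfType.
Local Notation C := R[i].
Implicit Types (P Q : {poly C}) (a b c u y z : C).

Lemma normc_subX_le a b (M : R) k : normc a <= M -> normc b <= M ->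
  normc (a ^+ k - b ^+ k) <= k%:R * M ^+ k.-1 * normc (a - b).
Proof.
move=> aM bM; have M0 := le_trans (normc_ge0 a) aM.
rewrite subrXX normcM mulrC ler_wpM2r ?normc_ge0 //.
have term_le (i : 'I_k) : normc (a ^+ (k.-1 - i) * b ^+ i) <= M ^+ k.-1.
  have i_le : (i <= k.-1)%N by rewrite -ltnS prednK // (leq_ltn_trans _ (ltn_ord i)).
  rewrite normcM !normcX -[in X in _ <= X](subnK i_le) exprD.
  by apply: ler_pM; rewrite ?exprn_ge0 ?normc_ge0 // lerXn2r ?nnegrE ?normc_ge0.
apply: le_trans (normc_sum _ _) _; apply: le_trans (ler_sum _ (fun i _ => term_le i)) _.
by rewrite sumr_const card_ord mulr_natl.
Qed.

Lemma poly_lipschitz_near P u : exists2 L, 0 <= L &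
  forall a b, normc (a - u) <= 1 -> normc (b - u) <= 1 ->
    normc (P.[a] - P.[b]) <= L * normc (a - b).
Proof.
set M := normc u + 1.
have M0 : 0 <= M by rewrite addr_ge0 ?normc_ge0.
have inM z : normc (z - u) <= 1 -> normc z <= M.
  by move=> zu; apply: le_trans (normc_le_shift z u) _; rewrite /M addrC lerD2l.
exists (\sum_(i < size P) normc P`_i * (i%:R * M ^+ i.-1)).
  by apply: sumr_ge0 => i _; rewrite !mulr_ge0 ?normc_ge0 ?exprn_ge0.
move=> a b /inM aM /inM bM; rewrite !horner_coef -sumrB mulr_suml.
apply: le_trans (normc_sum _ _) _; apply: ler_sum => i _.
by rewrite -mulrBr normcM -mulrA ler_wpM2l ?normc_ge0 ?normc_subX_le.
Qed.

(* Subtract the expansions [taylor2] of [Q.[y]] and [Q.[y']] and divide by [y - y']. *)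
Lemma fiber_pair_estimate Q u : exists2 L, 0 <= L &
  forall y y', normc (y - u) <= 1 -> normc (y' - u) <= 1 -> y != y' ->
    Q.[y] = Q.[y'] ->
    normc (Q^`().[u] + (ddiff2 Q u).[y'] * ((y - u) + (y' - u)))
      <= L * normc (y - u) ^+ 2.
Proof.
set H := ddiff2 Q u; have [L L0 lipH] := poly_lipschitz_near H u.
exists L => // y y' yu y'u yy' Qyy'.
have E : (y - y') * (Q^`().[u] + H.[y'] * ((y - u) + (y' - u)))
         = (H.[y'] - H.[y]) * (y - u) ^+ 2.
  have := taylor2 Q u y; have := taylor2 Q u y'; rewrite -Qyy' => ->.
  move/esym/eqP; rewrite -subr_eq0 => /eqP e.
  by apply/eqP; rewrite -subr_eq0 -e; apply/eqP; ring.
rewrite -(@ler_pM2l _ (normc (y - y'))) ?normc_gt0 ?subr_eq0 //.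
rewrite -normcM E normcM normcX [in X in _ <= X]mulrA.
apply: ler_wpM2r; rewrite ?exprn_ge0 ?normc_ge0 //.
by rewrite mulrC (distcC y) lipH.
Qed.

Lemma poly_inj_near_regular Q u : Q^`().[u] != 0 ->
  exists2 r, 0 < r & forall y y', normc (y - u) < r -> normc (y' - u) < r ->
    Q.[y] = Q.[y'] -> y = y'.
Proof.
move=> q0; set q := Q^`().[u]; set H := ddiff2 Q u.
have [L1 L10 estimate] := fiber_pair_estimate Q u.
have [L2 L20 lipH] := poly_lipschitz_near H u.
set B := normc H.[u] + L2.
have H_bound y : normc (y - u) <= 1 -> normc H.[y] <= B.
  move=> yu; have := lipH y u yu; rewrite subrr normc0 ler01 => /(_ isT).
  have := normc_le_shift H.[y] H.[u]; have := ler_piMr L20 yu; rewrite /B; lra.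
have q_gt0 : 0 < normc q := normc_gt0 q0.
have B0 : 0 <= B by rewrite addr_ge0 ?normc_ge0.
set r := Num.min 1 (normc q / (L1 + 2 * B + 1)).
have r_gt0 : 0 < r by rewrite lt_min ltr01 divr_gt0 //; lra.
have r_le1 : r <= 1 by rewrite ge_min lexx.
have r_small : r * (L1 + 2 * B + 1) <= normc q.
  by rewrite -ler_pdivlMr ?ge_min ?lexx ?orbT //; lra.
exists r => // y y' yu y'u Qyy'; apply/eqP/negPn/negP => yy'.
have yu1 : normc (y - u) <= 1 by apply: ltW; apply: lt_le_trans r_le1.
have y'u1 : normc (y' - u) <= 1 by apply: ltW; apply: lt_le_trans r_le1.
set S := (y - u) + (y' - u).
have S_le : normc S <= 2 * r.
  by apply: le_trans (le_normcD _ _) _; lra.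
have HS_le : normc (H.[y'] * S) <= B * (2 * r).
  by rewrite normcM; apply: ler_pM; rewrite ?normc_ge0 ?H_bound.
have sq_le : L1 * normc (y - u) ^+ 2 <= L1 * r.
  apply: ler_wpM2l => //; rewrite expr2.
  by apply: le_trans (ler_pM _ _ (ltW yu) yu1) _; rewrite ?normc_ge0 ?mulr1.
have := estimate y y' yu1 y'u1 yy' Qyy'; rewrite -/q -/H -/S => qHS.
have := normc_le_shift q (- (H.[y'] * S)); rewrite opprK normcN.
nra.
Qed.

Lemma fiber_sum_small_near_critical Q c eps :
  Q^`().[c] = 0 -> Q^`()^`().[c] != 0 -> 0 < eps ->
  exists2 rho, 0 < rho & forall y y', normc (y - c) < rho -> normc (y' - c) < rho ->
    y != y' -> Q.[y] = Q.[y'] -> normc ((y - c) + (y' - c)) <= eps * normc (y - c).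
Proof.
move=> q0 q''0 eps0; set H := ddiff2 Q c.
have Hc0 : H.[c] != 0.
  by apply: contraNneq q''0 => Hc; rewrite -ddiff2_diag -/H Hc mul0rn.
set k := normc H.[c]; have k_gt0 : 0 < k := normc_gt0 Hc0.
have [L1 L10 estimate] := fiber_pair_estimate Q c.
have [L2 L20 lipH] := poly_lipschitz_near H c.
set rho := Num.min 1 (Num.min (k / (2 * L2 + 1)) (eps * k / (2 * L1 + 1))).
have rho_gt0 : 0 < rho by rewrite !lt_min ltr01 !divr_gt0 ?mulr_gt0 //; lra.
have rho_le1 : rho <= 1 by rewrite ge_min lexx.
have rho_L2 : rho * (2 * L2 + 1) <= k.
  by rewrite -ler_pdivlMr ?ge_min ?lexx ?orbT //; lra.
have rho_L1 : rho * (2 * L1 + 1) <= eps * k.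
  by rewrite -ler_pdivlMr ?ge_min ?lexx ?orbT //; lra.
exists rho => // y y' yc y'c yy' Qyy'.
have [yc1 y'c1] : normc (y - c) <= 1 /\ normc (y' - c) <= 1.
  by split; apply: ltW; apply: lt_le_trans rho_le1.
have H_lower : k / 2 <= normc H.[y'].
  have := lipH y' c y'c1; rewrite subrr normc0 ler01 (distcC H.[y']) => /(_ isT).
  have := normc_le_shift H.[c] H.[y']; rewrite -/k.
  have : L2 * normc (y' - c) <= L2 * rho by apply: ler_wpM2l => //; apply: ltW.
  lra.
have := estimate y y' yc1 y'c1 yy' Qyy'; rewrite q0 add0r normcM -/H.
set S := (y - c) + (y' - c); have n0 := normc_ge0 (y - c) => est.
rewrite -(ler_pM2r k_gt0).
have /= := ler_wpM2l (normc_ge0 S) H_lower.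
have /= := ler_wpM2l L10 (ler_wpM2r n0 (ltW yc)).
have /= := ler_wpM2r n0 rho_L1.
have := mulr_ge0 (ltW rho_gt0) n0.
by move: est; rewrite expr2; lra.
Qed.

Lemma fiber_le2_near_critical Q c : Q^`().[c] = 0 -> Q^`()^`().[c] != 0 ->
  exists2 rho, 0 < rho & forall a b e,
    normc (a - c) < rho -> normc (b - c) < rho -> normc (e - c) < rho ->
    Q.[a] = Q.[b] -> Q.[a] = Q.[e] -> [|| a == b, a == e | b == e].
Proof.
move=> q0 q''0; have half_gt0 : 0 < 2^-1 :> R by rewrite invr_gt0 ltr0Sn.
have [rho rho0 small] := fiber_sum_small_near_critical q0 q''0 half_gt0.
exists rho => // a b e ac bc ec Qab Qae.
apply/negPn/negP; rewrite !negb_or => /and3P[ab ae be].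
(* [small] bounds the pairwise sums of [a - c], [b - c], [e - c] by half their
   moduli, while twice each of them is a signed sum of these pairwise sums. *)
have := small a b ac bc ab Qab.
have := small e a ec ac ltac:(by rewrite eq_sym) (esym Qae).
have := small b e bc ec be (etrans (esym Qab) Qae).
have twice u v w : normc u + normc u <= normc (u + v) + normc (w + u) + normc (v + w).
  rewrite -mulr2n -normcMn (_ : u *+ 2 = (u + v) + (w + u) - (v + w)).
    by apply: le_trans (le_normcD _ _) _; rewrite normcN lerD2r le_normcD.
  by rewrite mulr2n; ring.
have := twice (a - c) (b - c) (e - c); have := twice (b - c) (e - c) (a - c).
have := twice (e - c) (a - c) (b - c).
have := normc_ge0 (a - c); have := normc_ge0 (b - c); have := normc_ge0 (e - c).
move=> e0 b0 a0 te tb ta sb se sa.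
have ac0 : normc (a - c) = 0 by lra.
have bc0 : normc (b - c) = 0 by lra.
move: ab; rewrite -subr_eq0 -(subrK c a) -(subrK c b) (eq0_normc ac0) (eq0_normc bc0).
by rewrite subrr eqxx.
Qed.

Lemma exists_nonroot_near P c d : P != 0 -> 0 < d ->
  exists2 y, ~~ root P y & normc (y - c) < d.
Proof.
move=> P0 d0; have [rs PE] := closed_field_poly_normal P.
pose near_c (k : nat) := c + (d / k.+2%:R)%:C%C.
have near_c_inj : injective near_c.
  move=> m n /addrI /complexI /mulfI; move=> /(_ (lt0r_neq0 d0)) /invr_inj /eqP.
  by rewrite eqr_nat => /eqP [].
have [k k_out] := exists_notin_inj rs near_c_inj.
exists (near_c k); first by rewrite (root_split P0 PE).
rewrite /near_c addrC addKr normc_real ger0_norm ?divr_ge0 ?ltW //.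
by rewrite ltr_pdivrMr // ltr_pMr // ltr1n.
Qed.

Lemma root_near_of_small_value P c d : 0 < d ->
  normc P.[c] < normc (lead_coef P) * d ^+ (size P).-1 ->
  exists2 z, root P z & normc (c - z) < d.
Proof.
move=> d0 small; have [rs PE] := closed_field_poly_normal P.
have P0 : P != 0.
  by apply: contraTneq small => ->; rewrite lead_coef0 normc0 mul0r -leNgt normc_ge0.
have [/hasP[z zrs zc] | /hasPn far] := boolP (has (fun z => normc (c - z) < d) rs).
  by exists z; rewrite ?(root_split P0 PE).
move: small; rewrite (horner_split PE) normcM normc_prod -(size_split P0 PE).
have -> : d ^+ size rs = \prod_(z <- rs) d by rewrite big_const_seq count_predT iter_mulr_1.
rewrite ltr_pM2l ?normc_gt0 ?lead_coef_eq0 // ltNge => /negP[].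
by rewrite !big_seq; apply: ler_prod => z zrs; rewrite ltW //= leNgt far.
Qed.

Lemma poly_not_inj_near_critical Q c d : (2 < size Q)%N -> Q^`().[c] = 0 -> 0 < d ->
  exists y y', [/\ y != y', normc (y - c) < d, normc (y' - c) < d & Q.[y] = Q.[y']].
Proof.
move=> Q_gt2 q0 d0; set d1 := Num.min d 1.
have d1_gt0 : 0 < d1 by rewrite lt_min d0 ltr01.
have d1_le : d1 <= d /\ d1 <= 1 by rewrite !ge_min !lexx orbT.
set eps := normc (lead_coef Q) * d1 ^+ (size Q).-2.
have eps_gt0 : 0 < eps.
  by rewrite mulr_gt0 ?exprn_gt0 ?normc_gt0 // lead_coef_eq0 -size_poly_gt0 ltnW // ltnW.
have [L L0 lipDc] := poly_lipschitz_near (ddiff Q c) c.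
set t := Num.min d1 (eps / (L + 1)).
have t_gt0 : 0 < t by rewrite lt_min d1_gt0 divr_gt0 //; lra.
have t_le : t <= d1 by rewrite ge_min lexx.
have t_eps : t * (L + 1) <= eps by rewrite -ler_pdivlMr ?ge_min ?lexx ?orbT //; lra.
have Q'0 : Q^`() != 0 by rewrite deriv_neq0 // ltnW.
have [y y_reg yc] := exists_nonroot_near c Q'0 t_gt0.
have [size_Dy lead_Dy] := ddiff_spec y (ltnW Q_gt2).
have Dy_small : normc (ddiff Q y).[c] < eps.
  rewrite horner_ddiffC -[_.[y]]subr0 -q0 -ddiff_diag.
  apply: le_lt_trans (lipDc _ _ _ _) _; rewrite ?subrr ?normc0 ?ler01 //.
    by apply: ltW; apply: lt_le_trans yc _; case: d1_le => _; apply: le_trans.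
  have : L * normc (y - c) <= L * t by apply: ler_wpM2l => //; apply: ltW.
  lra.
have [z z_root zc] : exists2 z, root (ddiff Q y) z & normc (c - z) < d1.
  by apply: root_near_of_small_value => //; rewrite lead_Dy size_Dy.
exists y, z; split.
- by apply: contraNneq y_reg => yz; move: z_root; rewrite -yz /root ddiff_diag.
- by apply: lt_le_trans yc _; apply: le_trans t_le d1_le.1.
- by rewrite distcC; apply: lt_le_trans zc d1_le.1.
- by apply/esym/eqP; rewrite -subr_eq0 -horner_ddiff (eqP z_root) mul0r.
Qed.
End PolynomialsNearAPoint.

Section Arc.
Variable R : rcfType.
Local Notation C := R[i].
Implicit Types (x y : C) (s t : R).

Definition arc x y s t : C := x + (y - x) * Complex t (s * (t * (1 - t))).

Lemma arc0 x y s : arc x y s 0 = x.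
Proof. by rewrite /arc mul0r mulr0 (_ : Complex 0 0 = 0) // mulr0 addr0. Qed.

Lemma arc1 x y s : arc x y s 1 = y.
Proof. by rewrite /arc subrr !mulr0 (_ : Complex 1 0 = 1) // mulr1 addrC subrK. Qed.

Lemma arc_lipschitz x y s : exists2 K, 0 < K & forall t t',
  0 <= t <= 1 -> 0 <= t' <= 1 -> normc (arc x y s t - arc x y s t') <= K * `|t - t'|.
Proof.
set K0 := normc (y - x) * (1 + `|s|).
have K0_ge0 : 0 <= K0 by rewrite mulr_ge0 ?addr_ge0 ?normc_ge0.
exists (K0 + 1) => [|t t' /andP[t0 t1] /andP[t'0 t'1]]; first lra.
rewrite /arc opprD addrACA subrr add0r -mulrBr normcM.
have -> : Complex t (s * (t * (1 - t))) - Complex t' (s * (t' * (1 - t')))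
          = Complex (t - t') (s * (t - t') * (1 - t - t')) by congr Complex; ring.
have dev : `|s * (t - t') * (1 - t - t')| <= `|s| * `|t - t'|.
  rewrite !normrM ler_piMr ?mulr_ge0 ?normr_ge0 //.
  by rewrite ler_norml; apply/andP; split; lra.
apply: le_trans (_ : _ <= K0 * `|t - t'|) _; last first.
  by apply: ler_pM; rewrite ?normr_ge0 ?lerDl.
rewrite /K0 -[in X in _ <= X]mulrA; apply: ler_pM; rewrite ?normc_ge0 // mulrDl mul1r.
by apply: le_trans (normc_le_ReIm _) _; rewrite lerD2l.
Qed.

(* For [x != y], the arcs [arc x y s] for distinct [s] meet only at their
   endpoints, so a finite set is avoided by all but finitely many of them. *)
Lemma arc_avoids x y (rs : seq C) : x != y ->
  exists s, forall t, 0 < t < 1 -> arc x y s t \notin rs.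
Proof.
move=> xy; set d := y - x; have d0 : d != 0 by rewrite subr_eq0 eq_sym.
pose w b := (b - x) / d.
pose bad := [seq complex.Im (w b) / (complex.Re (w b) * (1 - complex.Re (w b))) | b <- rs].
have nat_inj : injective (fun k : nat => k%:R : R).
  by move=> m n /eqP; rewrite eqr_nat => /eqP.
have [k k_good] := exists_notin_inj bad nat_inj.
exists k%:R => t /andP[t0 t1]; apply: contra k_good => t_rs.
have w_arc : w (arc x y k%:R t) = Complex t (k%:R * (t * (1 - t))).
  by rewrite /w /arc addrC addKr [d * _]mulrC mulfK.
have tt0 : t * (1 - t) != 0 by rewrite mulf_neq0 ?gt_eqF // subr_gt0.
by apply/mapP; exists (arc x y k%:R t); rewrite // w_arc /= mulfK.
Qed.

End Arc.

Section Rigidity.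
Variable R : realType.
Local Notation C := R[i].
Variables (Q : {poly C}) (h : C -> C).
Hypotheses (h_cont : normc_continuous h) (hQ : forall z, Q.[h z] = Q.[z]).

Lemma fixed_near_regular_fixed_point u : Q^`().[u] != 0 -> h u = u ->
  exists2 d, 0 < d & forall z, normc (z - u) < d -> h z = z.
Proof.
move=> q0 hu; have [r r0 Q_inj] := poly_inj_near_regular q0.
have [d d0 hd] := h_cont u r0.
exists (Num.min r d) => [|z]; first by rewrite lt_min r0 d0.
rewrite lt_min => /andP[zr zd]; apply: Q_inj => //.
by rewrite -{1}hu; apply: hd.
Qed.

Lemma fixed_from_below (p : R -> C) K t : 0 < K ->
  (forall t t', 0 <= t <= 1 -> 0 <= t' <= 1 -> normc (p t - p t') <= K * `|t - t'|) ->
  0 < t <= 1 -> (forall s, 0 <= s < t -> h (p s) = p s) -> h (p t) = p t.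
Proof.
move=> K0 p_lip /andP[t0 t1] below; apply/eqP/negPn/negP => hpt.
set eta := normc (h (p t) - p t); have eta0 : 0 < eta by rewrite normc_gt0 ?subr_eq0.
have [dl dl0 hdl] := h_cont (p t) (divr_gt0 eta0 (ltr0Sn _ 1)).
set e := Num.min dl (eta / 2).
have e0 : 0 < e by rewrite lt_min dl0 divr_gt0.
have [e_dl e_eta] : e <= dl /\ e <= eta / 2 by rewrite !ge_min !lexx orbT.
set m := Num.min t (e / K).
have m0 : 0 < m by rewrite lt_min t0 divr_gt0.
have [m_t mK] : m <= t /\ m * K <= e.
  by split; rewrite /m ?ge_min ?lexx // -ler_pdivlMr // ge_min lexx orbT.
set s := t - m / 2.
have s_t : 0 <= s < t by apply/andP; split; rewrite /s; lra.
have ps_pt : normc (p s - p t) < e.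
  apply: le_lt_trans (p_lip s t _ _) _.
  - by case/andP: s_t => s0 st; rewrite s0 (le_trans (ltW st) t1).
  - by rewrite (ltW t0) t1.
  by rewrite /s addrAC subrr add0r normrN ger0_norm; lra.
have := hdl _ (lt_le_trans ps_pt e_dl); rewrite below // => hps_hpt.
have := le_normcD (h (p t) - p s) (p s - p t).
by rewrite addrA subrK -/eta (distcC (h (p t))); lra.
Qed.

Lemma fixed_along_path (p : R -> C) K : 0 < K ->
  (forall t t', 0 <= t <= 1 -> 0 <= t' <= 1 -> normc (p t - p t') <= K * `|t - t'|) ->
  (forall t, 0 <= t < 1 -> Q^`().[p t] != 0) -> h (p 0) = p 0 -> h (p 1) = p 1.
Proof.
move=> K0 p_lip p_reg hp0.
apply: (@real_induction01 _ (fun t => h (p t) = p t)) => //; last by rewrite ler01 lexx.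
  by move=> t; apply: fixed_from_below K0 p_lip.
move=> t /andP[t0 t1] upto.
have [d d0 hd] := fixed_near_regular_fixed_point (p_reg t (introT andP (conj t0 t1)))
  (upto t (introT andP (conj t0 (lexx t)))).
exists (Num.min (1 - t) (d / K)) => [|s /andP[ts se]].
  by rewrite lt_min subr_gt0 t1 divr_gt0.
have /andP[s1 sd] : (s - t < 1 - t) && (s - t < d / K) by rewrite -lt_min; lra.
apply: hd; apply: le_lt_trans (p_lip s t _ _) _.
- by apply/andP; split; lra.
- by rewrite t0 ltW.
by rewrite gtr0_norm ?subr_gt0 // mulrC -ltr_pdivlMr.
Qed.

Lemma regular_fixed_point_fixes_all x : Q^`() != 0 -> Q^`().[x] != 0 -> h x = x ->
  forall y, h y = y.
Proof.
move=> Q'0 x_reg hx y; have [<- //|xy] := eqVneq x y.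
have [rs Q'E] := closed_field_poly_normal Q^`().
have [s s_avoids] := arc_avoids rs xy.
have [K K0 lip] := arc_lipschitz x y s.
rewrite -(arc1 x y s); apply: (fixed_along_path K0 lip); last by rewrite arc0.
move=> t /andP[t0 t1]; have [<-|tn0] := eqVneq 0 t; first by rewrite arc0.
have /negPf := s_avoids t ltac:(by rewrite lt_neqAle tn0 t0 t1).
by rewrite -(root_split Q'0 Q'E) /root => ->.
Qed.

End Rigidity.

Lemma uniq_map_inj_in (T U : eqType) (F : T -> U) (s : seq T) :
  uniq (map F s) -> {in s &, injective F}.
Proof.
elim: s => //= x s IH /andP[Fx_out s_uniq] a b; rewrite !inE.
case/orP=> [/eqP-> | a_s] /orP[/eqP-> | b_s] // Fab.
- by move: Fx_out; rewrite Fab map_f.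
- by move: Fx_out; rewrite -Fab map_f.
- exact: IH.
Qed.

Section CriticalValues.
Variable R : realType.
Local Notation C := R[i].
Implicit Types (Q : {poly C}) (s rs : seq C).

Lemma uniq_critical_values Q s rs : uniq s -> size s = size rs ->
  (forall w, w \in s <-> is_critical_value Q w) ->
  (forall z, root Q^`() z -> z \in rs) -> uniq [seq Q.[z] | z <- rs].
Proof.
move=> s_uniq s_size s_crit rs_crit; apply: (leq_size_uniq s_uniq).
  by move=> w /s_crit[z [/rs_crit z_rs <-]]; apply: map_f.
by rewrite size_map s_size.
Qed.

Lemma regular_fiber Q w : (1 < size Q)%N -> ~ is_critical_value Q w ->
  exists r, [/\ uniq r, size r = (size Q).-1 & forall z, (z \in r) = (Q.[z] == w)].
Proof.
move=> Q_gt1 w_reg; set P := Q - w%:P.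
have sizeP : size P = size Q.
  by rewrite size_addl // size_opp (leq_ltn_trans (size_polyC_leq1 _) Q_gt1).
have P0 : P != 0 by rewrite -size_poly_gt0 sizeP ltnW.
have [r PE] := closed_field_poly_normal P.
have in_r z : (z \in r) = (Q.[z] == w).
  by rewrite -(root_split P0 PE) /root /P !hornerE subr_eq0.
exists r; split => //; last by rewrite (size_split P0 PE) sizeP.
rewrite -(separable_split P0 PE) unlock; apply: Pdiv.ClosedField.root_coprimep => z.
rewrite /root /P derivB derivC subr0 !hornerE subr_eq0 => /eqP Qz.
apply/negP => /eqP Q'z.
by apply: w_reg; exists z; rewrite /root Q'z eqxx.
Qed.

End CriticalValues.

Section FiberPreservingMaps.
Variable R : realType.
Local Notation C := R[i].
Variables (Q : {poly C}) (f : C -> C) (rs : seq C).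
Hypotheses (f_cont : normc_continuous f) (f_inj : injective f)
  (fQ : forall z, Q.[f z] = Q.[z]).
Hypotheses (Q_gt2 : (2 < size Q)%N)
  (Q'E : Q^`() = lead_coef Q^`() *: \prod_(z <- rs) ('X - z%:P))
  (crit_uniq : uniq [seq Q.[z] | z <- rs]).

Let Q'0 : Q^`() != 0. Proof. by rewrite deriv_neq0 // ltnW. Qed.

Lemma critical_point_image c : root Q^`() c -> root Q^`() (f c).
Proof.
move=> /eqP q0; apply/negPn/negP => fc_reg.
have [r r0 Q_inj] := poly_inj_near_regular fc_reg.
have [d d0 fd] := f_cont c r0.
have [y [y' [yy' yc y'c Qyy']]] := poly_not_inj_near_critical Q_gt2 q0 d0.
have /f_inj fyy' : f y = f y' by apply: Q_inj; rewrite ?fd ?fQ.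
by rewrite fyy' eqxx in yy'.
Qed.

Lemma critical_point_fixed c : c \in rs -> f c = c.
Proof.
move=> c_rs; apply: (uniq_map_inj_in crit_uniq) => //.
by rewrite -(root_split Q'0 Q'E) critical_point_image // (root_split Q'0 Q'E).
Qed.

Lemma fiber_preserving_involutive : involutive f.
Proof.
have [c c_rs] : exists c, c \in rs.
  case: rs (size_split Q'0 Q'E) => [|c ?]; last by exists c; rewrite mem_head.
  by rewrite size_deriv_num; case: (size Q) Q_gt2 => [|[|[]]].
have fc := critical_point_fixed c_rs.
have /eqP q0 : root Q^`() c by rewrite (root_split Q'0 Q'E).
have q''0 := deriv_split_neq0 Q'0 Q'E (map_uniq crit_uniq) c_rs.
have [rho rho0 le2] := fiber_le2_near_critical q0 q''0.
have [d1 d10 fd1] := f_cont c rho0; rewrite fc in fd1.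
have [d2 d20 fd2] := f_cont c d10; rewrite fc in fd2.
set dl := Num.min rho (Num.min d1 d2).
have dl0 : 0 < dl by rewrite !lt_min rho0 d10 d20.
have [dl_rho dl_d1 dl_d2] : [/\ dl <= rho, dl <= d1 & dl <= d2].
  by rewrite !ge_min !lexx !orbT.
have [y y_reg yc] := exists_nonroot_near c Q'0 dl0.
have ffy : f (f y) = y.
  have := le2 y (f y) (f (f y)) (lt_le_trans yc dl_rho) (fd1 _ (lt_le_trans yc dl_d1)).
  move=> /(_ (fd1 _ (fd2 _ (lt_le_trans yc dl_d2))) (esym (fQ y)) ltac:(by rewrite !fQ)).
  case/or3P=> /eqP e; first by rewrite -e -e.
    by rewrite -e.
  by rewrite -e; apply/esym/f_inj.
have ffQ z : Q.[(f \o f) z] = Q.[z] by rewrite /= !fQ.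
exact: (regular_fixed_point_fixes_all (normc_continuous_comp f_cont f_cont) ffQ Q'0 y_reg ffy).
Qed.

Lemma exists_regular_fixed_point : odd (size Q).-1 ->
  exists2 x, Q^`().[x] != 0 & f x = x.
Proof.
move=> odd_fibre; have f_invol := fiber_preserving_involutive.
have nat_inj : injective (fun k : nat => (k%:R : R)%:C%C).
  by move=> m n /complexI/eqP; rewrite eqr_nat => /eqP.
have [k w_out] := exists_notin_inj [seq Q.[z] | z <- rs] nat_inj.
set w := (k%:R)%:C%C in w_out.
have w_reg : ~ is_critical_value Q w.
  by case=> z [z_root Qz]; rewrite -Qz map_f // -(root_split Q'0 Q'E) in w_out.
have [r [r_uniq r_size in_r]] := regular_fiber (ltnW Q_gt2) w_reg.
have r_stable : {in r, forall z, f z \in r} by move=> z; rewrite !in_r fQ.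
have r_odd : odd (size r) by rewrite r_size.
have [x x_r fx] := involution_fixed_point f_invol r_uniq r_odd r_stable.
exists x => //; apply/negP => /eqP Q'x; apply: w_reg.
by exists x; split; [rewrite /root Q'x | apply/eqP; rewrite -in_r].
Qed.

End FiberPreservingMaps.

Theorem mainTheorem8 (R : realType) (g : nat) (Q : {poly R[i]}) (f : R[i] -> R[i]) :
  size Q = (2 * g + 2)%N ->
  has_n_critical_values Q (2 * g)%N ->
  diffeomorphism f ->
  (forall x : R[i], Q.[f x] = Q.[x]) ->
  forall x : R[i], f x = x.
Proof.
move=> sizeQ [s [s_uniq [s_size s_crit]]] [finv [fK [_ [f_smooth _]]]] fQ.
have f_cont := realify_normc_continuous (f_smooth 0%N).
have f_inj := can_inj fK.
case: g sizeQ s_size => [|g] sizeQ s_size.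
  by move=> x; apply: (size2_horner_inj sizeQ); rewrite fQ.
have Q_gt2 : (2 < size Q)%N by rewrite sizeQ addn2.
have Q'0 : Q^`() != 0 by rewrite deriv_neq0 // ltnW.
have [rs Q'E] := closed_field_poly_normal Q^`().
have crit_uniq : uniq [seq Q.[z] | z <- rs].
  apply: (uniq_critical_values s_uniq _ s_crit) => [|z].
    by rewrite (size_split Q'0 Q'E) size_deriv_num sizeQ s_size addn2.
  by rewrite (root_split Q'0 Q'E).
have [|x x_reg fx] := exists_regular_fixed_point f_cont f_inj fQ Q_gt2 Q'E crit_uniq.
  by rewrite sizeQ addn2 succnK oddS mul2n odd_double.
exact: (regular_fixed_point_fixes_all f_cont fQ Q'0 x_reg fx).
Qed.
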